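(* Let $\mu$ be a locally finite positive Borel measure on $\mathbb{R}$, fix $k\in\mathbb{N}$, and fix a dyadic grid $\mathcal{D}$ in $\mathbb{R}$. Then: (1) For every $Q\in\mathcal{D}$, \[ \dim L_{Q;k}^{2}(\mu)=\dim\big(\mathrm{Range}\,\boldsymbol{M}_{Q_{\mathrm{left}},k}\cap\mathrm{Range}\,\boldsymbol{M}_{Q_{\mathrm{right}},k}\big), \] where $Q_{\mathrm{left}},Q_{\mathrm{right}}$ are the left and right halves of $Q$. In particular, $\dim L_{Q;k}^{2}(\mu)=k$ for all $Q\in\mathcal{D}$ if and only if $\boldsymbol{M}_{Q,k}\succ0$ (positive definite) for all $Q\in\mathcal{D}$. (2) If $\boldsymbol{M}_{Q,k}\succ0$ for all $Q\in\mathcal{D}$, then for each $Q\in\mathcal{D}$ one can choose an orthonormal basis $\{a_{Q}^{\mu,\ell}\}_{\ell=1}^{k}$ of $L_{Q;k}^{2}(\mu)$ (orthonormal in $L^{2}(\mu)$) such that, in addition to $\int a_{Q}^{\mu,\ell}(x)x^{i}d\mu(x)=0$ for $0\le i\le k-1$, the following additional moment conditions hold: \[ \int a_{Q}^{\mu,\ell}(x)\,x^{i}\,d\mu(x)=0\qquad\text{for all }2\le\ell\le k\text{ and }k\le i\le k+\ell-2 . \]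
   Context: For a dyadic interval $Q$, $Q_{\mathrm{left}}$ and $Q_{\mathrm{right}}$ are its two dyadic halves. $L_{Q;k}^{2}(\mu)$ is the subspace of $L^{2}(\mu)$ consisting of functions $f=\mathbf{1}_{Q_{\mathrm{left}}}p+\mathbf{1}_{Q_{\mathrm{right}}}q$ with $p,q$ real polynomials of degree at most $k-1$ such that $\int_{Q}f(x)x^{i}d\mu(x)=0$ for $0\le i\le k-1$. For an interval $J$, $\boldsymbol{M}_{J,k}$ is the $k\times k$ matrix of moments with entries $(\boldsymbol{M}_{J,k})_{ij}=\int_{J}x^{i+j}d\mu(x)$, $0\le i,j\le k-1$, i.e. $\boldsymbol{M}_{J,k}=\int_J V_k(x)V_k(x)^{\mathrm{tr}}d\mu(x)$ with $V_k(x)=(1,x,\dots,x^{k-1})^{\mathrm{tr}}$. *)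

From HB Require Import structures.
From mathcomp Require Import all_boot all_order all_algebra.
From mathcomp Require Import all_classical all_reals all_analysis.
Set Implicit Arguments. Unset Strict Implicit. Unset Printing Implicit Defensive.
Import Order.TTheory GRing.Theory Num.Theory.
Local Open Scope classical_set_scope.
Local Open Scope ring_scope.

Section Defs.
Variable R : realType.

Definition dlen (n : int) : R := (2%:R : R) ^ (- n).

Definition hoi (a b : R) : set R := [set x | a <= x < b].

(* A dyadic interval Q is encoded by its left endpoint a and level n:
   Q = [a, a + 2^(-n)).  Its two dyadic halves: *)
Definition dyI (Q : R * int) : set R := hoi Q.1 (Q.1 + dlen Q.2).
Definition dyLeft (Q : R * int) : set R := hoi Q.1 (Q.1 + dlen (Q.2 + 1)).
Definition dyRight (Q : R * int) : set R :=
  hoi (Q.1 + dlen (Q.2 + 1)) (Q.1 + dlen Q.2).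

Definition dyadic_grid (D : set (R * int)) : Prop :=
  (forall (n : int) (x : R),
     exists a, [/\ D (a, n), x \in dyI (a, n) &
                forall b, D (b, n) -> x \in dyI (b, n) -> b = a]) /\
  (forall a n, D (a, n) -> D (a, n + 1) /\ D (a + dlen (n + 1), n + 1)).

Definition locally_finite (mu : {measure set R -> \bar R}) : Prop :=
  forall a b : R, (mu [set x : R | (a <= x <= b)%R] < +oo)%E.

Definition moment_mx (mu : {measure set R -> \bar R}) (J : set R) (k : nat)
  : 'M[R]_k :=
  \matrix_(i < k, j < k) fine (\int[mu]_(x in J) ((x ^+ (i + j))%:E))%E.

Definition posdef (k : nat) (M : 'M[R]_k) : Prop :=
  forall v : 'cV[R]_k, v != 0 -> 0 < (v^T *m M *m v) 0 0.

Definition in_LQk (mu : {measure set R -> \bar R}) (Q : R * int) (k : nat)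
  (f : R -> R) : Prop :=
  (exists p q : {poly R}, [/\ (size p <= k)%N, (size q <= k)%N &
     f = fun x => \1_(dyLeft Q) x * p.[x] + \1_(dyRight Q) x * q.[x]]) /\
  forall i : nat, (i < k)%N ->
    (\int[mu]_(x in dyI Q) ((f x * x ^+ i)%:E) = 0)%E.

(* dim L^2_{Q;k}(mu) = d, as a subspace of L^2(mu) (functions identified
   when equal mu-a.e.): there is a family of d elements of the subspace that
   is linearly independent in L^2(mu) and spans the subspace in L^2(mu). *)
Definition dim_LQk (mu : {measure set R -> \bar R}) (Q : R * int) (k : nat)
  (d : nat) : Prop :=
  exists b : 'I_d -> R -> R,
    [/\ forall l, in_LQk mu Q k (b l),
        forall c : 'I_d -> R,
          {ae mu, forall x, \sum_(l < d) c l * b l x = 0} -> forall l, c l = 0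
      & forall f, in_LQk mu Q k f ->
          exists c : 'I_d -> R,
            {ae mu, forall x, f x = \sum_(l < d) c l * b l x}].

End Defs.

(* An element of L^2_{Q;k}(mu) is 1_{Q_left} p + 1_{Q_right} q for coefficient rows
   p, q, and its k vanishing moments say exactly p M_left + q M_right = 0.  Since
   p M_left p^T is the integral of p^2 over Q_left, the function vanishes mu-a.e. iff
   p M_left = 0 = q M_right.  Hence, modulo null functions, f |-> p M_left = - q M_right
   identifies L^2_{Q;k} with the intersection of the row spaces of M_left and M_right.
   Halves of grid intervals are grid intervals and every grid interval is a half of
   one, so dimension k everywhere means every M_Q is invertible, which for a Gram
   matrix means positive definite.

   When M_left and M_right are invertible, u |-> 1_{Q_left} (u M_left^-1)
   - 1_{Q_right} (u M_right^-1) is onto L^2_{Q;k}; it turns the L^2 inner product into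
   the positive definite form of M_left^-1 + M_right^-1, and the moment against
   x^(k+j) into a linear functional h_j.  A basis orthonormal for that form with
   e_l h_j = 0 for j < l is built from the last vector backwards: e_l is a unit vector
   orthogonal to e_(l+1), ..., e_(k-1) and killing h_0, ..., h_(l-1), which are only
   k - 1 linear conditions. *)

From HB Require Import structures.
From mathcomp Require Import all_boot all_order all_algebra.
From mathcomp Require Import all_classical all_reals all_analysis.
From mathcomp Require Import ring lra zify measurable_realfun.
Set Implicit Arguments.
Unset Strict Implicit.
Unset Printing Implicit Defensive.

Import Order.TTheory GRing.Theory Num.Theory.
Local Open Scope classical_set_scope.
Local Open Scope ring_scope.

Lemma kermx_nonzero {F : fieldType} {m p} {C : 'M[F]_(m, p)} :
  (\rank C < m)%N -> exists2 u : 'rV_m, u != 0 & u *m C = 0.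
Proof.
move=> rkC; have /rowV0Pn[u] : kermx C != 0.
  by rewrite -mxrank_eq0 mxrank_ker subn_eq0 -ltnNge.
by rewrite sub_kermx => /eqP uC u_neq0; exists u.
Qed.

Lemma mulmx_colE (R : pzSemiRingType) m p q (A : 'M[R]_(m, p)) (B : 'M[R]_(p, q)) i j :
  (A *m B) i j = (A *m col j B) i 0.
Proof. by rewrite !mxE; apply: eq_bigr => l _; rewrite mxE. Qed.

Section OrthonormalFlag.
Variables (R : rcfType) (n : nat) (G : 'M[R]_n).

Definition gform (u v : 'rV[R]_n) : R := (u *m G *m v^T) 0 0.

Lemma gformZl a u v : gform (a *: u) v = a * gform u v.
Proof. by rewrite /gform -!scalemxAl mxE. Qed.

Lemma gformZr a u v : gform u (a *: v) = a * gform u v.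
Proof. by rewrite /gform linearZ -!scalemxAr mxE. Qed.

Lemma gform0l v : gform 0 v = 0.
Proof. by rewrite /gform !mul0mx mxE. Qed.

Lemma gform_row_mxE m (u : 'rV_n) (E : 'M[R]_(m, n)) i :
  (u *m G *m E^T) 0 i = gform u (row i E).
Proof. by rewrite mulmx_colE /gform tr_row. Qed.

Lemma gform_mulmxl {m} (v : 'rV_m) (E : 'M[R]_(m, n)) w :
  gform (v *m E) w = \sum_i v 0 i * gform (row i E) w.
Proof.
rewrite /gform -!mulmxA mxE; apply: eq_bigr => i _.
by rewrite !mulmxA -!row_mul [row _ _ _ _]mxE.
Qed.

Lemma orthonormal_row_free m (E : 'M[R]_(m, n)) :
  (forall i j, gform (row i E) (row j E) = (i == j)%:R) -> row_free E.
Proof.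
move=> E_orth; apply: inj_row_free => v vE0; apply/rowP => j.
have := gform_mulmxl v E (row j E); rewrite vE0 gform0l (bigD1 j) //= E_orth eqxx.
rewrite big1 => [|i /negbTE ij]; last by rewrite E_orth ij mulr0.
by rewrite mulr1 addr0 mxE => ->.
Qed.

Hypothesis G_sym : G^T = G.
Hypothesis G_pos : forall u : 'rV_n, u != 0 -> 0 < gform u u.

Lemma gformC u v : gform u v = gform v u.
Proof.
rewrite /gform; have -> : (u *m G *m v^T) 0 0 = ((u *m G *m v^T)^T) 0 0.
  by rewrite [RHS]mxE.
by rewrite !trmx_mul trmxK G_sym mulmxA.
Qed.

Lemma exists_unit_kernel {m} (C : 'M[R]_(n, m)) :
  (m < n)%N -> exists2 u, gform u u = 1 & u *m C = 0.
Proof.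
move=> lt_mn; have [v v_neq0 vC] := kermx_nonzero (leq_ltn_trans (rank_leq_col C) lt_mn).
have s_gt0 : 0 < Num.sqrt (gform v v) by rewrite sqrtr_gt0 G_pos.
exists ((Num.sqrt (gform v v))^-1 *: v); last by rewrite -scalemxAl vC scaler0.
rewrite gformZl gformZr mulrA -expr2 exprVn sqr_sqrtr ?ltW ?G_pos //.
by rewrite mulVf // gt_eqF ?G_pos.
Qed.

Variable h : nat -> 'cV[R]_n.

Lemma orthonormal_flag_suffix m : (m <= n)%N ->
  exists e : nat -> 'rV[R]_n,
   (forall l1 l2, (n - m <= l1 < n)%N -> (n - m <= l2 < n)%N ->
      gform (e l1) (e l2) = (l1 == l2)%:R) /\
   (forall l j, (n - m <= l < n)%N -> (j < l)%N -> (e l *m h j) 0 0 = 0).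
Proof.
elim: m => [_|m IH lt_mn].
  by exists (fun=> 0); split=> [l1 l2|l j]; rewrite subn0 => /andP[]; lia.
have [e [e_orth e_ann]] := IH (ltnW lt_mn).
pose L := (n - m.+1)%N.
pose E : 'M[R]_(m, n) := \matrix_(i < m) e (L.+1 + i)%N.
pose H : 'M[R]_(n, L) := \matrix_(i < n, j < L) h j i 0.
have [u u_norm1] := exists_unit_kernel (row_mx (G *m E^T) H) (ltac:(lia) : (m + L < n)%N).
rewrite mul_mx_row mulmxA -[0](row_mx0 R 1 m L) => /eq_row_mx[uE uH].
have u_orth t : (L < t < n)%N -> gform u (e t) = 0.
  move=> /andP[Lt tn]; have tm : (t - L.+1 < m)%N by lia.
  move/matrixP/(_ 0 (Ordinal tm)): uE.
  by rewrite gform_row_mxE rowK mxE /= subnKC.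
have u_ann j : (j < L)%N -> (u *m h j) 0 0 = 0.
  move=> jL; have colH : col (Ordinal jL) H = h j by apply/colP => i; rewrite !mxE.
  by move/matrixP/(_ 0 (Ordinal jL)): uH; rewrite mulmx_colE colH => ->; rewrite mxE.
exists (fun t => if t == L then u else e t); split.
- move=> l1 l2 l1n l2n.
  case: eqP => [->|l1L]; case: eqP => [->|l2L].
  + by rewrite u_norm1 eqxx.
  + by rewrite u_orth; [case: eqP => // /esym/l2L | lia].
  + by rewrite gformC u_orth; [case: eqP => // /l1L | lia].
  + by apply: e_orth; lia.
- move=> l j ln jl; case: eqP => [lL|lL]; first by apply: u_ann; lia.
  by apply: e_ann => //; lia.
Qed.

Lemma orthonormal_flag : exists e : nat -> 'rV[R]_n,
  (forall l1 l2, (l1 < n)%N -> (l2 < n)%N -> gform (e l1) (e l2) = (l1 == l2)%:R) /\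
  (forall l j, (l < n)%N -> (j < l)%N -> (e l *m h j) 0 0 = 0).
Proof.
have [e [e_orth e_ann]] := orthonormal_flag_suffix (leqnn n).
by exists e; split=> [l1 l2|l j] *; [apply: e_orth | apply: e_ann]; lia.
Qed.

End OrthonormalFlag.

Lemma posdef_row_free (R : realType) k (M : 'M[R]_k) : posdef M -> row_free M.
Proof.
move=> M_pos; apply: inj_row_free => u uM; apply/eqP; apply: contraT => u_neq0.
by have := M_pos u^T; rewrite trmx_eq0 trmxK uM mul0mx mxE ltxx => /(_ u_neq0).
Qed.

Section DyadicIntervals.
Variable R : realType.

Lemma dlen_gt0 (n : int) : 0 < dlen R n.
Proof. by rewrite /dlen exprz_gt0. Qed.

Lemma dlen_halves (n : int) : dlen R n = dlen R (n + 1) + dlen R (n + 1).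
Proof.
have two_neq0 : (2%:R : R) != 0 by rewrite pnatr_eq0.
rewrite /dlen -[in LHS](addrK 1 n) opprB addrC expfzDr // expr1z; ring.
Qed.

Lemma dyI_halves (Q : R * int) : dyI Q = dyLeft Q `|` dyRight Q.
Proof.
have := dlen_gt0 (Q.2 + 1); have := dlen_halves Q.2.
rewrite /dyI /dyLeft /dyRight /hoi => halves len_gt0; apply/seteqP; split => x /=.
- move=> /andP[ax xb]; have [xl|xl] := ltP x (Q.1 + dlen R (Q.2 + 1)).
  + by left; apply/andP; split; lra.
  + by right; apply/andP; split; lra.
- by case=> /andP[ax xb]; apply/andP; split; lra.
Qed.

Lemma dyLeft_dyRight_disj (Q : R * int) x : dyLeft Q x -> dyRight Q x -> False.
Proof. by rewrite /dyLeft /dyRight /hoi /= => /andP[_ ?] /andP[? _]; lra. Qed.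

Lemma dyadic_grid_halves (D : set (R * int)) (Q : R * int) : dyadic_grid D -> D Q ->
  exists Q1 Q2, [/\ D Q1, D Q2, dyI Q1 = dyLeft Q & dyI Q2 = dyRight Q].
Proof.
case: Q => a n [_ grid_halves] DQ; have [DQ1 DQ2] := grid_halves a n DQ.
exists (a, n + 1), (a + dlen R (n + 1), n + 1); split => //.
by rewrite /dyI /dyRight /= (dlen_halves n) addrA.
Qed.

Lemma dyadic_grid_parent (D : set (R * int)) (Q : R * int) : dyadic_grid D -> D Q ->
  exists Q', D Q' /\ (dyI Q = dyLeft Q' \/ dyI Q = dyRight Q').
Proof.
case: Q => a n [grid_part grid_halves] DQ.
have [a' [Da' /set_mem a_in _]] := grid_part (n - 1) a.
move: a_in; rewrite /dyI /hoi /= => /andP[a'a aa'].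
have [DL DR] := grid_halves a' (n - 1) Da'; rewrite subrK in DL DR.
have halves := dlen_halves (n - 1); rewrite subrK in halves.
have len_gt0 := dlen_gt0 n.
have [b [_ _ b_uniq]] := grid_part n a.
have a_eq_b : a = b by apply: b_uniq => //; apply/mem_set/andP; split=> /=; lra.
exists (a', n - 1); split => //.
have [al|ar] := ltP a (a' + dlen R n).
- left; have a'_eq_b : a' = b.
    by apply: b_uniq => //; apply/mem_set/andP; split=> /=; lra.
  by rewrite /dyI /dyLeft /= subrK a_eq_b a'_eq_b.
- right; have a'_eq_b : a' + dlen R n = b.
    by apply: b_uniq => //; apply/mem_set/andP; split=> /=; lra.
  by rewrite /dyI /dyRight /= subrK a_eq_b -a'_eq_b halves addrA.
Qed.

End DyadicIntervals.

Section Moments.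
Variables (R : realType) (mu : {measure set R -> \bar R}).
Hypothesis mu_lfin : locally_finite mu.

Lemma hoi_measurable (a b : R) : measurable (hoi a b).
Proof.
have -> : hoi a b = [set` `[a, b[%R] by apply/seteqP; split => x /=; rewrite in_itv.
exact: measurable_itv.
Qed.

Lemma hoi_measure_lt_oo (a b : R) : (mu (hoi a b) < +oo)%E.
Proof.
apply: le_lt_trans (mu_lfin a b); apply: le_measure; rewrite ?inE.
- exact: hoi_measurable.
- have -> : [set x : R | a <= x <= b] = [set` `[a, b]%R].
    by apply/seteqP; split => x /=; rewrite in_itv.
  exact: measurable_itv.
- by move=> x /= /andP[-> /ltW].
Qed.

Lemma integrable_exprn_hoi (a b : R) n :
  mu.-integrable (hoi a b) (fun x => (x ^+ n)%:E).
Proof.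
apply: (measurable_bounded_integrable (f := fun x : R => x ^+ n)).
- exact: hoi_measurable.
- exact: hoi_measure_lt_oo.
- exact: exprn_measurable.
exists ((`|a| + `|b|) ^+ n); split; first by rewrite num_real.
move=> r Cr x /= /andP[ax xb]; apply: le_trans (ltW Cr).
rewrite normrX; apply: lerXn2r; rewrite ?nnegrE ?addr_ge0 //.
have := ler_norm b; have := normr_ge0 a; have := normr_ge0 b.
have := ler_norm (- a); rewrite normrN.
by have [x0|x0] := leP 0 x; [rewrite ger0_norm | rewrite ltr0_norm]; lra.
Qed.

Definition moment (J : set R) (n : nat) : R := fine (\int[mu]_(x in J) (x ^+ n)%:E)%E.

Lemma integral_hoi_sum_monomials (a b : R) (T : finType) (c : T -> R) (m : T -> nat) :
  (\int[mu]_(x in hoi a b) (\sum_t c t * x ^+ m t)%:E =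
   (\sum_t c t * moment (hoi a b) (m t))%:E)%E.
Proof.
have mJ := hoi_measurable a b.
under eq_integral do rewrite -sumEFin.
rewrite integral_sum //; last first.
  move=> t; under eq_fun do rewrite EFinM.
  by apply: integrableZl => //; exact: integrable_exprn_hoi.
rewrite -sumEFin; apply: eq_bigr => t _.
under eq_integral do rewrite EFinM.
rewrite integralZl //; last exact: integrable_exprn_hoi.
rewrite /moment EFinM fineK //.
by apply: integrable_fin_num => //; exact: integrable_exprn_hoi.
Qed.

Variable k : nat.

Definition row_horner (p : 'rV[R]_k) (x : R) : R := \sum_(i < k) p 0 i * x ^+ i.

Definition moment_col (J : set R) (n : nat) : 'cV[R]_k := \col_i moment J (i + n).

Lemma measurable_row_horner (p : 'rV[R]_k) D : measurable_fun D (row_horner p).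
Proof.
apply: measurable_sum => i; apply: (measurable_funM (f := cst (p 0 i))).
  exact: measurable_cst.
exact: exprn_measurable.
Qed.

Lemma moment_mx_mulmxE J (p : 'rV[R]_k) (j : 'I_k) :
  (p *m moment_mx mu J k) 0 j = (p *m moment_col J j) 0 0.
Proof. by rewrite !mxE; apply: eq_bigr => i _; rewrite !mxE. Qed.

Lemma moment_mx_sym J : (moment_mx mu J k)^T = moment_mx mu J k.
Proof. by apply/matrixP => i j; rewrite !mxE addnC. Qed.

Lemma integral_row_horner_exprn a b (p : 'rV[R]_k) n :
  (\int[mu]_(x in hoi a b) (row_horner p x * x ^+ n)%:E =
   ((p *m moment_col (hoi a b) n) 0 0)%:E)%E.
Proof.
under eq_integral do rewrite /row_horner mulr_suml.
under eq_integral => x _ do under eq_bigr => i _ do rewrite -mulrA -exprD.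
rewrite (integral_hoi_sum_monomials _ _ (fun i : 'I_k => p 0 i) (fun i => i + n)%N).
by rewrite !mxE; congr (_%:E); apply: eq_bigr => i _; rewrite !mxE.
Qed.

Lemma integral_row_horner_mul a b (p q : 'rV[R]_k) :
  (\int[mu]_(x in hoi a b) (row_horner p x * row_horner q x)%:E =
   ((p *m moment_mx mu (hoi a b) k *m q^T) 0 0)%:E)%E.
Proof.
under eq_integral do rewrite /row_horner mulr_suml.
under eq_integral => x _ do under eq_bigr => i _ do rewrite mulr_sumr.
under eq_integral => x _ do under eq_bigr => i _ do under eq_bigr => j _ do
  rewrite mulrACA -exprD.
under eq_integral => x _ do rewrite pair_bigA /=.
rewrite (integral_hoi_sum_monomials _ _ (fun ij : 'I_k * 'I_k => p 0 ij.1 * q 0 ij.2)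
   (fun ij => ij.1 + ij.2)%N).
congr (_%:E); rewrite -(pair_bigA _ (fun i j : 'I_k =>
  p 0 i * q 0 j * moment (hoi a b) (i + j))) /= !mxE exchange_big /=.
apply: eq_bigr => j _; rewrite !mxE mulr_suml; apply: eq_bigr => i _.
by rewrite !mxE mulrAC.
Qed.

Lemma moment_form_ge0 a b (p : 'rV[R]_k) :
  0 <= (p *m moment_mx mu (hoi a b) k *m p^T) 0 0.
Proof.
rewrite -lee_fin -integral_row_horner_mul.
by apply: integral_ge0 => x _; rewrite lee_fin -expr2 sqr_ge0.
Qed.

Lemma moment_form_eq0_ae a b (p : 'rV[R]_k) :
  (p *m moment_mx mu (hoi a b) k *m p^T) 0 0 = 0 ->
  {ae mu, forall x, hoi a b x -> row_horner p x = 0}.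
Proof.
move=> form0.
have mf : measurable_fun (hoi a b) (EFin \o (fun x => row_horner p x * row_horner p x)).
  by apply/measurable_EFinP; apply: measurable_funM; exact: measurable_row_horner.
have := (ae_eq_integral_abs mu (hoi_measurable a b) mf).1; rewrite /ae_eq => abs0.
have : {ae mu, forall x, hoi a b x -> (row_horner p x * row_horner p x)%:E = 0%E}.
  apply: abs0; rewrite -[RHS]/(0%:E) -form0 -integral_row_horner_mul.
  by apply: eq_integral => x _ /=; rewrite ger0_norm // -expr2 sqr_ge0.
apply: filterS => x sq0 /sq0 [] /eqP.
by rewrite mulf_eq0 orbb => /eqP.
Qed.

Lemma ae_eq0_moment_mx a b (p : 'rV[R]_k) :
  {ae mu, forall x, hoi a b x -> row_horner p x = 0} ->
  p *m moment_mx mu (hoi a b) k = 0.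
Proof.
move=> p_ae0; apply/rowP => j; rewrite moment_mx_mulmxE [RHS]mxE.
have := integral_row_horner_exprn a b p j.
rewrite (ae_eq_integral (cst 0%E)) ?integral0 => [[<-]//| | | |].
- exact: hoi_measurable.
- apply/measurable_EFinP; apply: measurable_funM; first exact: measurable_row_horner.
  exact: exprn_measurable.
- exact: measurable_cst.
- by apply: filterS p_ae0 => x px0 /px0 ->; rewrite mul0r.
Qed.

Lemma row_free_moment_posdef a b :
  row_free (moment_mx mu (hoi a b) k) -> posdef (moment_mx mu (hoi a b) k).
Proof.
move=> M_free v v_neq0; rewrite lt_neqAle.
have := moment_form_ge0 a b v^T; rewrite trmxK => ->; rewrite andbT.
apply: contra v_neq0 => /eqP/esym form0.
have : v^T *m moment_mx mu (hoi a b) k = 0.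
  by apply/ae_eq0_moment_mx/moment_form_eq0_ae; rewrite trmxK.
by move/eqP; rewrite mulmx_free_eq0 // trmx_eq0.
Qed.

Section Halves.
Variable Q : R * int.
Local Notation ML := (moment_mx mu (dyLeft Q) k).
Local Notation MR := (moment_mx mu (dyRight Q) k).

Definition piecewise (g1 g2 : R -> R) (x : R) : R :=
  \1_(dyLeft Q) x * g1 x + \1_(dyRight Q) x * g2 x.

Lemma piecewiseL g1 g2 x : dyLeft Q x -> piecewise g1 g2 x = g1 x.
Proof.
move=> xL; rewrite /piecewise !indicE (mem_set xL) memNset ?mul1r ?mul0r ?addr0 //.
exact: dyLeft_dyRight_disj.
Qed.

Lemma piecewiseR g1 g2 x : dyRight Q x -> piecewise g1 g2 x = g2 x.
Proof.
move=> xR; rewrite /piecewise !indicE (mem_set xR) memNset ?mul1r ?mul0r ?add0r //.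
by move=> xL; apply: dyLeft_dyRight_disj xL xR.
Qed.

Lemma piecewise_out g1 g2 x : ~ dyI Q x -> piecewise g1 g2 x = 0.
Proof.
rewrite dyI_halves => xI.
by rewrite /piecewise !indicE !memNset ?mul0r ?addr0 // => ?; apply: xI; [right | left].
Qed.

Lemma piecewise_mulr g1 g2 g x :
  piecewise g1 g2 x * g x = piecewise (fun y => g1 y * g y) (fun y => g2 y * g y) x.
Proof. by rewrite /piecewise mulrDl -!mulrA. Qed.

Lemma piecewiseM g1 g2 h1 h2 x : piecewise g1 g2 x * piecewise h1 h2 x =
  piecewise (fun y => g1 y * h1 y) (fun y => g2 y * h2 y) x.
Proof.
have [xL|xL] := pselect (dyLeft Q x); first by rewrite !piecewiseL.
have [xR|xR] := pselect (dyRight Q x); first by rewrite !piecewiseR.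
by rewrite !piecewise_out ?mul0r // dyI_halves => -[].
Qed.

Lemma integral_dyI_piecewise (g1 g2 : R -> R) :
  measurable_fun setT g1 -> measurable_fun setT g2 ->
  (\int[mu]_(x in dyI Q) (piecewise g1 g2 x)%:E =
   \int[mu]_(x in dyLeft Q) (g1 x)%:E + \int[mu]_(x in dyRight Q) (g2 x)%:E)%E.
Proof.
move=> mg1 mg2; rewrite dyI_halves integral_setU.
- by congr (_ + _)%E; apply: eq_integral => x /set_mem x_in;
    [rewrite piecewiseL | rewrite piecewiseR].
- exact: hoi_measurable.
- exact: hoi_measurable.
- apply/measurable_EFinP; apply: measurable_funD; apply: measurable_funM;
    by [apply: measurable_indic; exact: hoi_measurable | exact: measurable_funTS].
- by apply/disj_setPS => x []; exact: dyLeft_dyRight_disj.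
Qed.

Lemma integral_piecewise (g1 g2 : R -> R) :
  measurable_fun setT g1 -> measurable_fun setT g2 ->
  (\int[mu]_x (piecewise g1 g2 x)%:E =
   \int[mu]_(x in dyLeft Q) (g1 x)%:E + \int[mu]_(x in dyRight Q) (g2 x)%:E)%E.
Proof.
move=> mg1 mg2; rewrite -integral_dyI_piecewise // (integral_mkcond (dyI Q)).
apply: eq_integral => x _; rewrite patchE; case: ifPn => // /negP xI.
by rewrite piecewise_out // => /mem_set.
Qed.

Definition split_poly (p q : 'rV[R]_k) : R -> R :=
  piecewise (row_horner p) (row_horner q).

Lemma integral_dyI_split_poly_exprn (p q : 'rV[R]_k) n :
  (\int[mu]_(x in dyI Q) (split_poly p q x * x ^+ n)%:E =
   ((p *m moment_col (dyLeft Q) n + q *m moment_col (dyRight Q) n) 0 0)%:E)%E.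
Proof.
under eq_integral do rewrite /split_poly (piecewise_mulr _ _ (fun y => y ^+ n)).
rewrite integral_dyI_piecewise; try by apply: measurable_funM;
  [exact: measurable_row_horner | exact: exprn_measurable].
by rewrite !integral_row_horner_exprn -EFinD !mxE.
Qed.

Lemma integral_split_poly_exprn (p q : 'rV[R]_k) n :
  (\int[mu]_x (split_poly p q x * x ^+ n)%:E =
   ((p *m moment_col (dyLeft Q) n + q *m moment_col (dyRight Q) n) 0 0)%:E)%E.
Proof.
under eq_integral do rewrite /split_poly (piecewise_mulr _ _ (fun y => y ^+ n)).
rewrite integral_piecewise; try by apply: measurable_funM;
  [exact: measurable_row_horner | exact: exprn_measurable].
by rewrite !integral_row_horner_exprn -EFinD !mxE.
Qed.

Lemma integral_split_poly_mul (p q p' q' : 'rV[R]_k) :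
  (\int[mu]_x (split_poly p q x * split_poly p' q' x)%:E =
   ((p *m ML *m p'^T + q *m MR *m q'^T) 0 0)%:E)%E.
Proof.
under eq_integral do rewrite /split_poly piecewiseM.
rewrite integral_piecewise; try by apply: measurable_funM; exact: measurable_row_horner.
by rewrite !integral_row_horner_mul -EFinD !mxE.
Qed.

Lemma split_poly_ae_eq0 (p q : 'rV[R]_k) : p *m ML = 0 -> q *m MR = 0 ->
  {ae mu, forall x, split_poly p q x = 0}.
Proof.
move=> pL0 qR0.
have pL_ae0 : {ae mu, forall x, dyLeft Q x -> row_horner p x = 0}.
  by apply: moment_form_eq0_ae; rewrite pL0 mul0mx mxE.
have qR_ae0 : {ae mu, forall x, dyRight Q x -> row_horner q x = 0}.
  by apply: moment_form_eq0_ae; rewrite qR0 mul0mx mxE.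
apply: filterS2 pL_ae0 qR_ae0 => x px0 qx0.
have [xL|xL] := pselect (dyLeft Q x); first by rewrite /split_poly piecewiseL ?px0.
have [xR|xR] := pselect (dyRight Q x); first by rewrite /split_poly piecewiseR ?qx0.
by rewrite /split_poly piecewise_out // dyI_halves => -[].
Qed.

Lemma ae_eq0_split_poly (p q : 'rV[R]_k) :
  {ae mu, forall x, split_poly p q x = 0} -> p *m ML = 0 /\ q *m MR = 0.
Proof.
move=> f_ae0; split; apply: ae_eq0_moment_mx; apply: filterS f_ae0 => x fx0 x_in;
  rewrite -fx0 /split_poly.
- by rewrite piecewiseL.
- by rewrite piecewiseR.
Qed.

Lemma row_horner_mulmx d (c : 'rV[R]_d) (P : 'M[R]_(d, k)) x :
  row_horner (c *m P) x = \sum_(l < d) c 0 l * row_horner (row l P) x.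
Proof.
rewrite /row_horner; under eq_bigr do rewrite mxE mulr_suml.
rewrite exchange_big; apply: eq_bigr => l _; rewrite mulr_sumr.
by apply: eq_bigr => i _; rewrite mxE mulrA.
Qed.

Lemma split_poly_mulmx d (c : 'rV[R]_d) (P P' : 'M[R]_(d, k)) x :
  split_poly (c *m P) (c *m P') x = \sum_(l < d) c 0 l * split_poly (row l P) (row l P') x.
Proof.
rewrite /split_poly /piecewise !row_horner_mulmx !mulr_sumr -big_split.
by apply: eq_bigr => l _; rewrite /=; ring.
Qed.

Lemma split_polyB (p q p' q' : 'rV[R]_k) x :
  split_poly (p - p') (q - q') x = split_poly p q x - split_poly p' q' x.
Proof.
have row_hornerB (r r' : 'rV[R]_k) :
    row_horner (r - r') x = row_horner r x - row_horner r' x.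
  by rewrite /row_horner -sumrB; apply: eq_bigr => i _; rewrite !mxE mulrBl.
by rewrite /split_poly /piecewise !row_hornerB; ring.
Qed.

Lemma split_poly_in_LQk (p q : 'rV[R]_k) :
  p *m ML + q *m MR = 0 -> in_LQk mu Q k (split_poly p q).
Proof.
move=> pq0; split.
  exists (\poly_(i < k) \sum_(j < k | (j : nat) == i) p 0 j),
         (\poly_(i < k) \sum_(j < k | (j : nat) == i) q 0 j); split; try exact: size_poly.
  apply/funext => x; rewrite /split_poly /piecewise /row_horner !horner_poly.
  by congr (_ * _ + _ * _); apply: eq_bigr => i _; rewrite (big_pred1 i).
move=> i ik; rewrite integral_dyI_split_poly_exprn mxE.
move/rowP/(_ (Ordinal ik)): pq0.
by rewrite [LHS]mxE !moment_mx_mulmxE [RHS]mxE => ->.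
Qed.

Lemma in_LQk_split_poly f : in_LQk mu Q k f ->
  exists p q : 'rV[R]_k, f = split_poly p q /\ p *m ML + q *m MR = 0.
Proof.
move=> [[pf [qf [size_pf size_qf f_def]]] f_moments].
set p := \row_(i < k) pf`_i; set q := \row_(i < k) qf`_i.
have fE : f = split_poly p q.
  apply/funext => x; rewrite f_def /split_poly /piecewise /row_horner.
  rewrite (horner_coef_wide x size_pf) (horner_coef_wide x size_qf).
  by congr (_ * _ + _ * _); apply: eq_bigr => i _; rewrite mxE.
exists p, q; split => //; apply/rowP => j.
rewrite [LHS]mxE [RHS]mxE !moment_mx_mulmxE.
by move: (f_moments j (ltn_ord j)); rewrite fE integral_dyI_split_poly_exprn mxE => -[].
Qed.

Lemma dim_LQk_rank_capmx : dim_LQk mu Q k (\rank (ML^T :&: MR^T)%MS).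
Proof.
rewrite !moment_mx_sym; set Z := row_base (ML :&: MR)%MS.
have ZL : (Z <= ML)%MS by rewrite eq_row_base capmxSl.
have ZR : (Z <= MR)%MS by rewrite eq_row_base capmxSr.
set P := Z *m pinvmx ML; set P' := - (Z *m pinvmx MR).
have PL : P *m ML = Z by rewrite mulmxKpV.
have PR : P' *m MR = - Z by rewrite mulNmx mulmxKpV.
exists (fun l => split_poly (row l P) (row l P')); split.
- move=> l; apply: split_poly_in_LQk.
  by rewrite -!row_mul PL PR; apply/rowP => i; rewrite !mxE addrN.
- move=> c c_ae0 l.
  have : {ae mu, forall x, split_poly (\row_l c l *m P) (\row_l c l *m P') x = 0}.
    apply: filterS c_ae0 => x cx0; rewrite split_poly_mulmx -[RHS]cx0.
    by apply: eq_bigr => i _; rewrite mxE.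
  move=> /ae_eq0_split_poly[+ _]; rewrite -mulmxA PL => /eqP.
  by rewrite mulmx_free_eq0 ?row_base_free // => /eqP/rowP/(_ l); rewrite !mxE.
- move=> f /in_LQk_split_poly[p [q [-> pq0]]].
  have pE : p *m ML = - (q *m MR) by apply/eqP; rewrite -addr_eq0 pq0.
  have pZ : (p *m ML <= Z)%MS.
    by rewrite eq_row_base sub_capmx submxMl pE -mulNmx submxMl.
  set c := p *m ML *m pinvmx Z.
  exists (fun l => c 0 l).
  apply: filterS (@split_poly_ae_eq0 (p - c *m P) (q - c *m P') _ _).
  + by move=> x; rewrite split_polyB split_poly_mulmx => /eqP; rewrite subr_eq0 => /eqP.
  + by rewrite mulmxBl -mulmxA PL mulmxKpV // subrr.
  + by rewrite mulmxBl -mulmxA PR mulmxN mulmxKpV // pE opprK addrN.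
Qed.

Lemma dim_LQk_leq d d' : dim_LQk mu Q k d -> dim_LQk mu Q k d' -> (d <= d')%N.
Proof.
move=> [b [b_in b_indep _]] [b' [_ _ b'_span]].
have [C C_def] := choice (fun l => b'_span _ (b_in l)).
rewrite leqNgt; apply/negP => lt_d'd.
pose Cm := \matrix_(l < d, l' < d') C l l'.
have [w w_neq0 wC] := kermx_nonzero (leq_ltn_trans (rank_leq_col Cm) lt_d'd).
move: w_neq0; suff -> : w = 0 by rewrite eqxx.
apply/rowP => l; rewrite [RHS]mxE; move: l; apply: (b_indep (fun l => w 0 l)).
have C_ae : {ae mu, forall x l, b l x = \sum_l' C l l' * b' l' x}.
  by apply: filter_forall => l; exact: C_def.
apply: filterS C_ae => x bx; under eq_bigr do rewrite bx big_distrr.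
rewrite exchange_big big1 // => l' _.
transitivity ((w *m Cm) 0 l' * b' l' x); last by rewrite wC mxE mul0r.
rewrite mxE big_distrl; apply: eq_bigr => l _; rewrite mxE; exact: mulrA.
Qed.

Section OrthonormalBasis.
Hypotheses (ML_pos : posdef ML) (MR_pos : posdef MR).

Let ML_unit : ML \in unitmx. Proof. by rewrite -row_free_unit posdef_row_free. Qed.
Let MR_unit : MR \in unitmx. Proof. by rewrite -row_free_unit posdef_row_free. Qed.

Definition LQk_of_row (u : 'rV[R]_k) : R -> R :=
  split_poly (u *m invmx ML) (- (u *m invmx MR)).

Definition LQk_gram : 'M[R]_k := invmx ML + invmx MR.

Definition moment_constraint (j : nat) : 'cV[R]_k :=
  invmx ML *m moment_col (dyLeft Q) (k + j) - invmx MR *m moment_col (dyRight Q) (k + j).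

Lemma gform_LQk_gramE u v : gform LQk_gram u v =
  (u *m invmx ML *m ML *m (v *m invmx ML)^T
   + u *m invmx MR *m MR *m (v *m invmx MR)^T) 0 0.
Proof.
by rewrite /gform mulmxDr mulmxDl !mulmxKV // !trmx_mul !trmx_inv !moment_mx_sym !mulmxA.
Qed.

Lemma LQk_gram_sym : LQk_gram^T = LQk_gram.
Proof. by rewrite linearD /= !trmx_inv !moment_mx_sym. Qed.

Lemma LQk_gram_pos u : u != 0 -> 0 < gform LQk_gram u u.
Proof.
move=> u_neq0; rewrite gform_LQk_gramE mxE.
have uL_neq0 : (u *m invmx ML)^T != 0.
  apply: contra u_neq0; rewrite trmx_eq0 => /eqP uL0.
  by rewrite -(mulmxKV ML_unit u) uL0 mul0mx.
have := ML_pos uL_neq0; rewrite trmxK => /lt_le_trans.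
by apply; rewrite lerDl; exact: moment_form_ge0.
Qed.

Lemma LQk_of_row_in_LQk u : in_LQk mu Q k (LQk_of_row u).
Proof. by apply: split_poly_in_LQk; rewrite mulNmx !mulmxKV // addrN. Qed.

Lemma in_LQk_LQk_of_row f : in_LQk mu Q k f -> exists u, f = LQk_of_row u.
Proof.
move=> /in_LQk_split_poly[p [q [-> pq0]]]; exists (p *m ML).
have pE : p *m ML = - (q *m MR) by apply/eqP; rewrite -addr_eq0 pq0.
by rewrite /LQk_of_row mulmxK // pE mulNmx mulmxK // opprK.
Qed.

Lemma LQk_of_row_mulmx d (c : 'rV[R]_d) (E : 'M[R]_(d, k)) x :
  LQk_of_row (c *m E) x = \sum_(l < d) c 0 l * LQk_of_row (row l E) x.
Proof.
rewrite /LQk_of_row -!mulmxA -mulmxN split_poly_mulmx.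
by apply: eq_bigr => l _; rewrite linearN /= !row_mul.
Qed.

Lemma integral_LQk_of_row_mul u v :
  (\int[mu]_x (LQk_of_row u x * LQk_of_row v x)%:E = (gform LQk_gram u v)%:E)%E.
Proof.
by rewrite integral_split_poly_mul gform_LQk_gramE linearN /= mulmxN !mulNmx opprK.
Qed.

Lemma integral_LQk_of_row_exprn u j :
  (\int[mu]_x (LQk_of_row u x * x ^+ (k + j))%:E = ((u *m moment_constraint j) 0 0)%:E)%E.
Proof. by rewrite integral_split_poly_exprn mulmxBr !mulmxA mulNmx. Qed.

Lemma moment_orthonormal_basis : exists a : 'I_k -> R -> R,
  [/\ forall l, in_LQk mu Q k (a l),
      forall l m, (\int[mu]_x ((a l x * a m x)%:E) = (l == m)%:R%:E)%E,
      forall f, in_LQk mu Q k f ->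
        exists c : 'I_k -> R, {ae mu, forall x, f x = \sum_(l < k) c l * a l x}
    & forall (l : 'I_k) (i : nat), (2 <= l.+1)%N -> (k <= i <= k + l.+1 - 2)%N ->
        (\int[mu]_x ((a l x * x ^+ i)%:E) = 0)%E].
Proof.
have [e [e_orth e_ann]] := orthonormal_flag LQk_gram_sym LQk_gram_pos moment_constraint.
pose E : 'M[R]_k := \matrix_(l < k) e l.
have E_unit : E \in unitmx.
  rewrite -row_free_unit; apply: (orthonormal_row_free (G := LQk_gram)) => l m.
  by rewrite /E !rowK e_orth.
exists (fun l => LQk_of_row (e l)); split.
- by move=> l; exact: LQk_of_row_in_LQk.
- by move=> l m; rewrite integral_LQk_of_row_mul e_orth.
- move=> f /in_LQk_LQk_of_row[u ->]; exists (fun l => (u *m invmx E) 0 l); apply: aeW => x.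
  by rewrite -{1}(mulmxKV E_unit u) LQk_of_row_mulmx; under eq_bigr do rewrite rowK.
- move=> l i l_gt0 /andP[k_le_i i_le]; have -> : i = (k + (i - k))%N by lia.
  by rewrite integral_LQk_of_row_exprn e_ann //; lia.
Qed.

End OrthonormalBasis.
End Halves.

Lemma dim_LQk_full_iff_posdef (D : set (R * int)) : dyadic_grid D ->
  ((forall Q, D Q -> dim_LQk mu Q k k) <->
   (forall Q, D Q -> posdef (moment_mx mu (dyI Q) k))).
Proof.
move=> gD; split => [dim_full Q DQ | M_pos Q DQ].
- have [Q' [DQ' QE]] := dyadic_grid_parent gD DQ.
  have := dim_LQk_leq (dim_full Q' DQ') (dim_LQk_rank_capmx Q').
  rewrite !moment_mx_sym.
  set A := moment_mx mu (dyLeft Q') k; set B := moment_mx mu (dyRight Q') k => rk_cap.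
  have := mxrankS (capmxSl A B); have := mxrankS (capmxSr A B).
  have := rank_leq_col A; have := rank_leq_col B => rkB rkA capB capA.
  have rkA_eq : \rank A = k by lia.
  have rkB_eq : \rank B = k by lia.
  case: QE => ->; apply: row_free_moment_posdef; apply/eqP.
  + exact: rkA_eq.
  + exact: rkB_eq.
- have [Q1 [Q2 [DQ1 DQ2 Q1E Q2E]]] := dyadic_grid_halves gD DQ.
  have L_free : row_free (moment_mx mu (dyLeft Q) k).
    by apply: posdef_row_free; rewrite -Q1E; exact: M_pos.
  have R_full : row_full (moment_mx mu (dyRight Q) k).
    by rewrite row_full_unit -row_free_unit posdef_row_free // -Q2E; exact: M_pos.
  by have := dim_LQk_rank_capmx Q; rewrite !moment_mx_sym capmxT // (eqP L_free).
Qed.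

End Moments.

Theorem theorem2 (R : realType) (mu : {measure set R -> \bar R}) (k : nat)
  (D : set (R * int)) :
  locally_finite mu -> dyadic_grid D ->
  [/\ (forall Q, D Q ->
         dim_LQk mu Q k
           (\rank ((moment_mx mu (dyLeft Q) k)^T
                     :&: (moment_mx mu (dyRight Q) k)^T)%MS)),
      ((forall Q, D Q -> dim_LQk mu Q k k) <->
       (forall Q, D Q -> posdef (moment_mx mu (dyI Q) k)))
    & ((forall Q, D Q -> posdef (moment_mx mu (dyI Q) k)) ->
       forall Q, D Q ->
       exists a : 'I_k -> R -> R,
         [/\ forall l, in_LQk mu Q k (a l),
             forall l m, (\int[mu]_x ((a l x * a m x)%:E) = (l == m)%:R%:E)%E,
             forall f, in_LQk mu Q k f ->
               exists c : 'I_k -> R,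
                 {ae mu, forall x, f x = \sum_(l < k) c l * a l x}
           & forall (l : 'I_k) (i : nat),
               (2 <= l.+1)%N -> (k <= i <= k + l.+1 - 2)%N ->
               (\int[mu]_x ((a l x * x ^+ i)%:E) = 0)%E])].
Proof.
move=> mu_lfin gD; split.
- by move=> Q _; exact: dim_LQk_rank_capmx.
- exact: dim_LQk_full_iff_posdef.
- move=> M_pos Q DQ; have [Q1 [Q2 [DQ1 DQ2 Q1E Q2E]]] := dyadic_grid_halves gD DQ.
  have := M_pos _ DQ1; have := M_pos _ DQ2; rewrite Q1E Q2E => MR_pos ML_pos.
  exact: (moment_orthonormal_basis mu_lfin ML_pos MR_pos).
Qed.
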